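(* For every $n\ge0$, every element of $\mathcal B_{[n]}$ is a $P$-cycle in $W_{[n]}$, and the classes of the elements of $\mathcal B_{[n]}$ form an $\mathbb F_2$-basis of the Margolis homology $\mathcal M(W_{[n]},P)=\ker P/\operatorname{im}P$ (equivalently of $\mathcal M(M_{[n]},P)$).
   Context: Over $\mathbb F_2$, $R=\Lambda(t_i:i\ge1)\otimes\Lambda(x_i:i\ge1)$ with basis the monomials $t_Ix_J$ ($I,J\subset\mathbb N_+$ finite, $t_I=\prod_{i\in I}t_i$, $x_J=\prod_{j\in J}x_j$, $t_It_K=0$ if $I\cap K\neq\emptyset$), with linear operators $Q_1(t_Ix_J)=\sum_{j\in J}t_jt_Ix_{J\setminus\{j\}}$ and $P(t_Ix_J)=\sum_{K\subseteq J,|K|=2}t_Kt_Ix_{J\setminus K}$. For finite $J$, $W_J=\operatorname{span}\{t_Ix_{J\setminus I}:I\subseteq J\}$, closed under $Q_1,P$ and isomorphic as a $\Lambda(Q_1,P)$-module to $M_J=\bigotimes_{j\in J}M_j$, where $M_j$ has basis $t_j,x_j$ with $Q_1x_j=t_j$, $P=0$, and the tensor action uses $\Delta(P)=P\otimes1+Q_1\otimes Q_1+1\otimes P$. $[n]=\{1,\dots,n\}$. The exchange operation is the linear map $(t_Ix_J)^e=t_Jx_I$. Sets $\mathcal B_{[n]}$: $\mathcal B_{[0]}=\{1\}$; given $\mathcal B_{[2t]}$, $\mathcal B_{[2t+1]}=\{Q_1(b\,x_{2t+1})\}\cup\{Q_1(b\,x_{2t+1})^e\}$ and $\mathcal B_{[2t+2]}=\{Q_1(b\,x_{2t+1})x_{2t+2}\}\cup\{Q_1(b\,x_{2t+1})^e\,t_{2t+2}\}$,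 with $b$ ranging over $\mathcal B_{[2t]}$. *)

From HB Require Import structures.
From mathcomp Require Import all_boot all_order all_algebra.
Set Implicit Arguments. Unset Strict Implicit. Unset Printing Implicit Defensive.
Import GRing.Theory.
Local Open Scope ring_scope.

(* W_[n] : the F_2-vector space with basis the monomials t_I x_([n]\I), I ⊆ [n].
   The index i : 'I_n stands for the paper's index i+1 ∈ [n] = {1,..,n}.
   An element is its coefficient function: f I = coefficient of t_I x_([n]\I). *)
Definition W (n : nat) := {ffun {set 'I_n} -> 'F_2}.

Definition mono n (I : {set 'I_n}) : W n := [ffun K => (K == I)%:R].

Definition linext n m (g : {set 'I_n} -> W m) (f : W n) : W m :=
  [ffun K => \sum_(I : {set 'I_n}) f I * g I K].

Definition Q1 n : W n -> W n :=
  linext (fun I => \sum_(j in ~: I) mono (j |: I)).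

Definition Pop n : W n -> W n :=
  linext (fun I => \sum_(K : {set 'I_n} | (K \subset ~: I) && (#|K| == 2)) mono (K :|: I)).

Definition exch n : W n -> W n := linext (fun I => mono (~: I)).

Definition incl n (I : {set 'I_n}) : {set 'I_n.+1} :=
  [set widen_ord (leqnSn n) i | i in I].

(* multiplication by x_(n+1) : W_[n] -> W_[n+1], t_I x_J |-> t_I x_(J ∪ {n+1}) *)
Definition xmul n : W n -> W n.+1 := linext (fun I => mono (incl I)).

Definition tmul n : W n -> W n.+1 := linext (fun I => mono (ord_max |: incl I)).

Fixpoint Beven (t : nat) : {set W t.*2} :=
  match t return {set W t.*2} with
  | 0 => [set mono set0]
  | t'.+1 =>
      [set xmul (Q1 (xmul b)) | b in Beven t'] :|:
      [set tmul (exch (Q1 (xmul b))) | b in Beven t']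
  end.

Definition Bodd (t : nat) : {set W (t.*2).+1} :=
  [set Q1 (xmul b) | b in Beven t] :|: [set exch (Q1 (xmul b)) | b in Beven t].

(* The classes of the elements of S (a set of P-cycles) form an F_2-basis of
   the Margolis homology ker P / im P.  Over F_2, linear combinations are
   subset sums. *)
Definition margolis_basis n (S : {set W n}) : Prop :=
  [/\ (forall b, b \in S -> Pop b = 0),
      (forall z : W n, Pop z = 0 ->
         exists2 A : {set W n}, A \subset S &
           exists y : W n, z = \sum_(b in A) b + Pop y) &
      (forall A : {set W n}, A \subset S ->
         (exists y : W n, \sum_(b in A) b = Pop y) -> A = set0)].

From HB Require Import structures.
From mathcomp Require Import all_boot all_order all_algebra.
Set Implicit Arguments. Unset Strict Implicit. Unset Printing Implicit Defensive.
Import GRing.Theory.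
Local Open Scope ring_scope.

(* W_[n+1] = x W_[n] + t W_[n] with x = x_(n+1), t = t_(n+1), and in these
   coordinates P (x a + t c) = x (P a) + t (Q1 a + P c): (W_[n+1], P) is the
   mapping cone of Q1 acting on (W_[n], P).  Its Margolis homology is spanned
   by the t-multiples of representatives of the cokernel of Q1 on H(W_[n]),
   together with lifts x k + t c of cycles k such that Q1 k = P c.
   Let Q1e be Q1 conjugated by the exchange; Q1 Q1e + Q1e Q1 is the identity
   on W_[n] for n odd and zero for n even.  Every b in B_[2t] satisfies
   Q1 b = P (Q1e b) and b + b^e = Q1 (Q1e b), so Q1 kills H(W_[2t]); the cone
   basis {t b} u {x b + t Q1e b} becomes B_[2t+1] after adding to t b the
   boundary P (x Q1e b^e).  On H(W_[2t+1]), Q1 maps Q1(x b)^e to Q1(x b) and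
   kills Q1(x b), so the cone basis is B_[2t+2], and the two identities on b
   propagate to B_[2t+2]. *)

Lemma F2_cases (x : 'F_2) : x = 0 \/ x = 1.
Proof.
case: x => [[|[|m]]] Hm.
- by left; apply/val_inj.
- by right; apply/val_inj.
- by exfalso; move: Hm; rewrite Fp_cast.
Qed.

Lemma F2_natr (x : 'F_2) : x = (x : nat)%:R.
Proof. by case: (F2_cases x) => ->. Qed.

Lemma F2_natr_odd (m k : nat) : odd m = odd k -> (m%:R : 'F_2) = k%:R.
Proof. by move=> E; apply/val_inj; rewrite /= !val_Fp_nat // !modn2 E. Qed.


Lemma F2_natr_odd0 (m : nat) : odd m = false -> (m%:R : 'F_2) = 0.
Proof. by move=> m0; rewrite (F2_natr_odd (k := 0)) ?m0. Qed.

Lemma addWxx n (f : W n) : f + f = 0.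
Proof. by apply/ffunP => K; rewrite !ffunE addrr_pchar2 // pchar_Fp. Qed.

Lemma addWE n (f g : W n) K : (f + g) K = f K + g K.
Proof. exact: ffunE. Qed.

Lemma zeroWE n K : (0 : W n) K = 0.
Proof. exact: ffunE. Qed.

(* [char2] proves identities between sums in W n in which every summand occurs
   an even number of times: it abstracts the summands (keeping the operators
   opaque, so that matching never unfolds them) and then compares
   coefficients as parities. *)
Ltac char2_generalize t :=
  lazymatch t with
  | ?a + ?b => char2_generalize a; char2_generalize b
  | 0 => idtac
  | _ => tryif is_var t then idtac else
      let a := fresh "a" in
      with_strategy opaque [Q1 Pop exch xmul tmul] (set a := t); clearbody a
  end.

Ltac char2 :=
  lazymatch goal with |- ?l = ?r => char2_generalize l; char2_generalize r end;
  let K := fresh "K" in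
  apply/ffunP => K; rewrite ?addWE ?zeroWE;
  repeat match goal with |- context [@fun_of_fin _ _ _ ?X K] =>
    let a := fresh "a" in set a := fun_of_fin X K;
    clearbody a; rewrite [a]F2_natr; generalize (nat_of_ord a) => ?; clear a end;
  rewrite ?addr0 ?add0r -?natrD;
  first [apply: F2_natr_odd | apply: F2_natr_odd0 | apply/esym/F2_natr_odd0];
  rewrite ?oddD; repeat match goal with |- context [odd ?m] => case: (odd m) end; done.

Lemma addW_eq0 n (f g : W n) : f + g = 0 -> f = g.
Proof. by move=> fg0; rewrite -[g]add0r -fg0; char2. Qed.

Lemma linext_is_zmod_morphism n m (g : {set 'I_n} -> W m) : zmod_morphism (linext g).
Proof.
move=> u v; apply/ffunP => K; rewrite !ffunE -sumrB.
by apply: eq_bigr => I _; rewrite !ffunE mulrBl.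
Qed.

HB.instance Definition _ n :=
  GRing.isZmodMorphism.Build (W n) (W n) (@Q1 n) (linext_is_zmod_morphism _).
HB.instance Definition _ n :=
  GRing.isZmodMorphism.Build (W n) (W n) (@Pop n) (linext_is_zmod_morphism _).
HB.instance Definition _ n :=
  GRing.isZmodMorphism.Build (W n) (W n) (@exch n) (linext_is_zmod_morphism _).
HB.instance Definition _ n :=
  GRing.isZmodMorphism.Build (W n) (W n.+1) (@xmul n) (linext_is_zmod_morphism _).
HB.instance Definition _ n :=
  GRing.isZmodMorphism.Build (W n) (W n.+1) (@tmul n) (linext_is_zmod_morphism _).

Lemma linext_mono n m (g : {set 'I_n} -> W m) I : linext g (mono I) = g I.
Proof.
apply/ffunP => K; rewrite ffunE (bigD1 I) //= big1 => [|J /negbTE nJI].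
  by rewrite !ffunE eqxx mul1r addr0.
by rewrite ffunE nJI mul0r.
Qed.

Lemma mono_expansion n (f : W n) : f = \sum_(I | f I != 0) mono I.
Proof.
apply/ffunP => K; rewrite sum_ffunE.
case: (F2_cases (f K)) => fK.
  rewrite fK big1 // => I fI; rewrite ffunE; case: eqP => // KI.
  by rewrite -KI fK eqxx in fI.
rewrite fK (bigD1 K) /= ?fK ?oner_eq0 // big1 => [|I /andP [_ /negbTE nIK]].
  by rewrite ffunE eqxx addr0.
by rewrite ffunE eq_sym nIK.
Qed.

Ltac expand_monomials f :=
  rewrite (mono_expansion f) !raddf_sum -?big_split /=; apply: eq_bigr => I _.

Section IndexSets.
Variable n : nat.
Local Notation wid := (widen_ord (leqnSn n)).
Local Notation mx := (@ord_max n).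

Lemma widen_inj : injective wid.
Proof. by move=> i j /(congr1 val) ij; apply/val_inj. Qed.

Lemma widen_eq_max i : (wid i == mx) = false.
Proof. by rewrite -val_eqE /= ltn_eqF. Qed.

Lemma ord_max_or_widen (j : 'I_n.+1) : j = mx \/ exists i, j = wid i.
Proof.
have [lt_jn|] := ltnP j n; first by right; exists (Ordinal lt_jn); apply/val_inj.
by left; apply/val_inj/eqP; rewrite /= eqn_leq -ltnS ltn_ord.
Qed.

Lemma mem_incl i (I : {set 'I_n}) : (wid i \in incl I) = (i \in I).
Proof. exact/mem_imset/widen_inj. Qed.

Lemma max_notin_incl (I : {set 'I_n}) : (mx \in incl I) = false.
Proof. by apply/negbTE/imsetP => -[i _ /eqP]; rewrite eq_sym widen_eq_max. Qed.

Lemma incl_inj : injective (@incl n).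
Proof. exact/imset_inj/widen_inj. Qed.

Lemma inclU (I J : {set 'I_n}) : incl (I :|: J) = incl I :|: incl J.
Proof. exact: imsetU. Qed.

Lemma inclU1 i (I : {set 'I_n}) : incl (i |: I) = wid i |: incl I.
Proof. exact: imsetU1. Qed.

Lemma incl_subset (I J : {set 'I_n}) : (incl I \subset incl J) = (I \subset J).
Proof.
apply/subsetP/subsetP => sIJ i; first by rewrite -!mem_incl => /sIJ.
by case/imsetP => k kI ->; rewrite mem_incl sIJ.
Qed.

Lemma card_incl (I : {set 'I_n}) : #|incl I| = #|I|.
Proof. exact/card_imset/widen_inj. Qed.

Definition restr (K : {set 'I_n.+1}) : {set 'I_n} := [set i | wid i \in K].

Lemma restr_incl (I : {set 'I_n}) : restr (incl I) = I.
Proof. by apply/setP => i; rewrite inE mem_incl. Qed.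

Lemma restr_max_incl (I : {set 'I_n}) : restr (mx |: incl I) = I.
Proof. by apply/setP => i; rewrite !inE widen_eq_max mem_incl. Qed.

Lemma incl_restr (K : {set 'I_n.+1}) : mx \notin K -> incl (restr K) = K.
Proof.
move=> /negbTE mxK; apply/setP => j; case: (ord_max_or_widen j) => [->|[i ->]].
  by rewrite max_notin_incl mxK.
by rewrite mem_incl inE.
Qed.

Lemma max_incl_restr (K : {set 'I_n.+1}) : mx \in K -> mx |: incl (restr K) = K.
Proof.
move=> mxK; apply/setP => j; case: (ord_max_or_widen j) => [->|[i ->]].
  by rewrite !inE eqxx mxK.
by rewrite !inE widen_eq_max mem_incl inE.
Qed.

Lemma setC_incl (I : {set 'I_n}) : ~: incl I = mx |: incl (~: I).
Proof.
apply/setP => j; case: (ord_max_or_widen j) => [->|[i ->]].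
  by rewrite !(max_notin_incl, inE, eqxx).
by rewrite !(mem_incl, inE, widen_eq_max).
Qed.

Lemma setC_max_incl (I : {set 'I_n}) : ~: (mx |: incl I) = incl (~: I).
Proof.
apply/setP => j; case: (ord_max_or_widen j) => [->|[i ->]].
  by rewrite !(max_notin_incl, inE, eqxx).
by rewrite !(mem_incl, inE, widen_eq_max).
Qed.

Definition pairs_in (I : {set 'I_n}) : {set {set 'I_n}} :=
  [set J : {set 'I_n} | (J \subset I) && (#|J| == 2)%N].

Lemma pairs_in_incl (I : {set 'I_n}) (K : {set 'I_n.+1}) :
  (K \subset incl I) && (#|K| == 2)%N = (K \in (@incl n) @: pairs_in I).
Proof.
apply/idP/imsetP => [/andP [sKI cardK]|[J]]; last first.
  by rewrite inE => /andP [sJI cardJ] ->; rewrite incl_subset card_incl sJI.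
have mxK : mx \notin K by apply: contraTN isT => /(subsetP sKI); rewrite max_notin_incl.
exists (restr K); last by rewrite incl_restr.
by rewrite inE -incl_subset -card_incl incl_restr ?sKI.
Qed.

Lemma pairs_with_max (I : {set 'I_n}) (K : {set 'I_n.+1}) :
  [&& K \subset ~: incl I, (#|K| == 2)%N & mx \in K] =
  (K \in (fun i => [set mx; wid i]) @: ~: I).
Proof.
apply/idP/imsetP => [/and3P [sKI cardK mxK]|[i]]; last first.
  rewrite inE => iI ->; rewrite cards2 (eq_sym mx) widen_eq_max !inE eqxx /= andbT.
  by apply/subsetP => j; rewrite !inE => /orP [] /eqP ->;
    rewrite ?max_notin_incl ?mem_incl.
move: cardK; rewrite (cardsD1 mx) mxK add1n eqSS => /cards1P [k K1k].
have : k \in K :\ mx by rewrite K1k set11.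
rewrite !inE => /andP [].
case: (ord_max_or_widen k) K1k => [->|[i ->] K1i _ iK]; first by rewrite eqxx.
exists i; last by rewrite -(setD1K mxK) K1i.
by move/(subsetP sKI): iK; rewrite !inE mem_incl.
Qed.

Lemma pair_with_max_inj : injective (fun i => [set mx; wid i]).
Proof.
move=> i j /setP /(_ (wid i)); rewrite !inE eqxx orbT widen_eq_max /=.
by move/esym/eqP/widen_inj.
Qed.

End IndexSets.

Lemma Q1_mono n (I : {set 'I_n}) : Q1 (mono I) = \sum_(j in ~: I) mono (j |: I).
Proof. exact: linext_mono. Qed.

Lemma Pop_mono n (I : {set 'I_n}) : Pop (mono I) =
  \sum_(K : {set 'I_n} | (K \subset ~: I) && (#|K| == 2)%N) mono (K :|: I).
Proof. exact: linext_mono. Qed.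

Lemma exch_mono n (I : {set 'I_n}) : exch (mono I) = mono (~: I).
Proof. exact: linext_mono. Qed.

Lemma xmul_mono n (I : {set 'I_n}) : xmul (mono I) = mono (incl I).
Proof. exact: linext_mono. Qed.

Lemma tmul_mono n (I : {set 'I_n}) : tmul (mono I) = mono (ord_max |: incl I).
Proof. exact: linext_mono. Qed.

Lemma Q1_xmul n (f : W n) : Q1 (xmul f) = xmul (Q1 f) + tmul f.
Proof.
expand_monomials f.
rewrite xmul_mono tmul_mono !Q1_mono setC_incl big_setU1 ?max_notin_incl //=.
rewrite big_imset /=; last exact: in2W (@widen_inj n).
rewrite raddf_sum /= addrC; congr (_ + _); apply: eq_bigr => i _.
by rewrite xmul_mono inclU1.
Qed.

Lemma Q1_tmul n (f : W n) : Q1 (tmul f) = tmul (Q1 f).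
Proof.
expand_monomials f.
rewrite tmul_mono !Q1_mono setC_max_incl big_imset /=; last exact: in2W (@widen_inj n).
by rewrite raddf_sum /=; apply: eq_bigr => i _; rewrite tmul_mono inclU1 setUCA.
Qed.

Lemma exch_xmul n (f : W n) : exch (xmul f) = tmul (exch f).
Proof.
expand_monomials f.
by rewrite xmul_mono !exch_mono tmul_mono setC_incl.
Qed.

Lemma exch_tmul n (f : W n) : exch (tmul f) = xmul (exch f).
Proof.
expand_monomials f.
by rewrite tmul_mono !exch_mono xmul_mono setC_max_incl.
Qed.

Lemma Pop_tmul n (f : W n) : Pop (tmul f) = tmul (Pop f).
Proof.
expand_monomials f.
rewrite tmul_mono !Pop_mono setC_max_incl raddf_sum /=.
rewrite (eq_bigl (fun K => K \in (@incl n) @: pairs_in (~: I)));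
  last by move=> K; rewrite pairs_in_incl.
rewrite big_imset /=; last exact: in2W (@incl_inj n).
apply: eq_big => K; first by rewrite inE.
by rewrite inE => _; rewrite tmul_mono inclU setUCA.
Qed.

Lemma Pop_xmul n (f : W n) : Pop (xmul f) = xmul (Pop f) + tmul (Q1 f).
Proof.
expand_monomials f.
rewrite xmul_mono !Pop_mono Q1_mono !raddf_sum /=.
rewrite (bigID (fun K : {set 'I_n.+1} => ord_max \in K)) /=.
rewrite addrC; congr (_ + _).
  rewrite (eq_bigl (fun K => K \in (@incl n) @: pairs_in (~: I)));
    last first.
    move=> K; rewrite -pairs_in_incl setC_incl.
    have [mxK|mxK] := boolP (ord_max \in K); rewrite /= ?andbT ?andbF.
      apply/esym/negbTE/negP => /andP [/subsetP sK _].
      by move: (sK _ mxK); rewrite max_notin_incl.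
    congr (_ && _); apply/subsetP/subsetP => sK j jK; have := sK j jK; rewrite !inE.
      by case/orP => // /eqP jmx; rewrite -jmx jK in mxK.
    by move=> ->; rewrite orbT.
  rewrite big_imset /=; last exact: in2W (@incl_inj n).
  apply: eq_big => K; first by rewrite inE.
  by rewrite inE => _; rewrite xmul_mono inclU.
rewrite (eq_bigl (fun K => K \in (fun i => [set ord_max; widen_ord _ i]) @: ~: I));
  last by move=> K; rewrite -pairs_with_max andbA.
rewrite big_imset /=; last exact: in2W (@pair_with_max_inj n).
by apply: eq_bigr => i _; rewrite tmul_mono inclU1 setUA.
Qed.

Definition xpart n (f : W n.+1) : W n := [ffun I => f (incl I)].
Definition tpart n (f : W n.+1) : W n := [ffun I => f (ord_max |: incl I)].

Lemma xpart_is_zmod_morphism n : zmod_morphism (@xpart n).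
Proof. by move=> u v; apply/ffunP => I; rewrite !ffunE. Qed.

Lemma tpart_is_zmod_morphism n : zmod_morphism (@tpart n).
Proof. by move=> u v; apply/ffunP => I; rewrite !ffunE. Qed.

HB.instance Definition _ n :=
  GRing.isZmodMorphism.Build (W n.+1) (W n) (@xpart n) (@xpart_is_zmod_morphism n).
HB.instance Definition _ n :=
  GRing.isZmodMorphism.Build (W n.+1) (W n) (@tpart n) (@tpart_is_zmod_morphism n).

Lemma xmulE n (a : W n) K : xmul a K = if ord_max \in K then 0 else a (restr K).
Proof.
rewrite ffunE; case: ifP => mxK.
  rewrite big1 // => I _; rewrite ffunE; case: eqP => [KI|]; last by rewrite mulr0.
  by rewrite KI max_notin_incl in mxK.
rewrite (bigD1 (restr K)) //= big1 => [|I IK].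
  by rewrite ffunE incl_restr ?mxK // eqxx mulr1 addr0.
rewrite ffunE; case: eqP => [KI|]; last by rewrite mulr0.
by rewrite KI restr_incl eqxx in IK.
Qed.

Lemma tmulE n (c : W n) K : tmul c K = if ord_max \in K then c (restr K) else 0.
Proof.
rewrite ffunE; case: ifP => mxK; last first.
  rewrite big1 // => I _; rewrite ffunE; case: eqP => [KI|]; last by rewrite mulr0.
  by rewrite KI setU11 in mxK.
rewrite (bigD1 (restr K)) //= big1 => [|I IK].
  by rewrite ffunE max_incl_restr ?mxK // eqxx mulr1 addr0.
rewrite ffunE; case: eqP => [KI|]; last by rewrite mulr0.
by rewrite KI restr_max_incl eqxx in IK.
Qed.

Lemma xt_decomp n (f : W n.+1) : f = xmul (xpart f) + tmul (tpart f).
Proof.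
apply/ffunP => K; rewrite ffunE xmulE tmulE !ffunE.
case: ifP => mxK; first by rewrite add0r max_incl_restr.
by rewrite addr0 incl_restr ?mxK.
Qed.

Lemma xpart_xmul n (a : W n) : xpart (xmul a) = a.
Proof. by apply/ffunP => I; rewrite ffunE xmulE max_notin_incl restr_incl. Qed.

Lemma tpart_xmul n (a : W n) : tpart (xmul a) = 0.
Proof. by apply/ffunP => I; rewrite ffunE xmulE setU11 ffunE. Qed.

Lemma xpart_tmul n (c : W n) : xpart (tmul c) = 0.
Proof. by apply/ffunP => I; rewrite ffunE tmulE max_notin_incl ffunE. Qed.

Lemma tpart_tmul n (c : W n) : tpart (tmul c) = c.
Proof. by apply/ffunP => I; rewrite ffunE tmulE setU11 restr_max_incl. Qed.

Lemma exchK n : involutive (@exch n).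
Proof. by move=> f; expand_monomials f; rewrite !exch_mono setCK. Qed.

Definition Q1e n (f : W n) : W n := exch (Q1 (exch f)).

Lemma Q1e_is_zmod_morphism n : zmod_morphism (@Q1e n).
Proof. by move=> u v; rewrite /Q1e !raddfB. Qed.

HB.instance Definition _ n :=
  GRing.isZmodMorphism.Build (W n) (W n) (@Q1e n) (@Q1e_is_zmod_morphism n).

Lemma Q1e_xmul n (a : W n) : Q1e (xmul a) = xmul (Q1e a).
Proof. by rewrite /Q1e exch_xmul Q1_tmul exch_tmul. Qed.

Lemma Q1e_tmul n (c : W n) : Q1e (tmul c) = xmul c + tmul (Q1e c).
Proof. by rewrite /Q1e exch_tmul Q1_xmul raddfD /= exch_xmul exch_tmul exchK addrC. Qed.

Ltac push_ops := repeat progress rewrite ?(raddfD, raddf0, Q1_xmul, Q1_tmul,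
  Pop_xmul, Pop_tmul, exch_xmul, exch_tmul, Q1e_xmul, Q1e_tmul, exchK,
  xpart_xmul, tpart_xmul, xpart_tmul, tpart_tmul, addr0, add0r) /=.

Lemma tmul_inj n : injective (@tmul n).
Proof. by move=> c c' /(congr1 (@tpart n)); push_ops. Qed.

Lemma xpart_Pop n (f : W n.+1) : xpart (Pop f) = Pop (xpart f).
Proof. by rewrite {1}(xt_decomp f); push_ops. Qed.

Lemma tpart_Pop n (f : W n.+1) : tpart (Pop f) = Q1 (xpart f) + Pop (tpart f).
Proof. by rewrite {1}(xt_decomp f); push_ops. Qed.

Lemma set_I0 (K : {set 'I_0}) : K = set0.
Proof. by apply/setP => -[]. Qed.


Lemma Q1_W0 (f : W 0) : Q1 f = 0.
Proof.
rewrite (mono_expansion f) raddf_sum big1 // => I _ /=.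
by rewrite Q1_mono big1 // => -[].
Qed.

Lemma Pop_W0 (f : W 0) : Pop f = 0.
Proof.
rewrite (mono_expansion f) raddf_sum big1 // => I _ /=.
rewrite Pop_mono big_pred0 // => K.
by rewrite (set_I0 K) cards0 andbF.
Qed.

Lemma Q1Q1 n (f : W n) : Q1 (Q1 f) = 0.
Proof.
elim: n f => [|n IHn] f; first by rewrite !Q1_W0.
by rewrite (xt_decomp f); push_ops; rewrite !IHn; push_ops; char2.
Qed.

Lemma Q1_PopC n (f : W n) : Q1 (Pop f) = Pop (Q1 f).
Proof.
elim: n f => [|n IHn] f; first by rewrite !Pop_W0 !Q1_W0.
by rewrite (xt_decomp f); push_ops; rewrite !IHn !Q1Q1; push_ops; char2.
Qed.

Lemma PopPop n (f : W n) : Pop (Pop f) = 0.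
Proof.
elim: n f => [|n IHn] f; first by rewrite !Pop_W0.
by rewrite (xt_decomp f); push_ops; rewrite !IHn Q1_PopC; push_ops; char2.
Qed.

Lemma Q1eQ1e n (f : W n) : Q1e (Q1e f) = 0.
Proof. by rewrite /Q1e exchK Q1Q1 raddf0. Qed.

Lemma Q1_Q1e_bracket n (f : W n) : Q1 (Q1e f) + Q1e (Q1 f) = if odd n then f else 0.
Proof.
elim: n f => [|n IHn] f; first by rewrite /Q1e !Q1_W0 !raddf0 addr0.
rewrite (xt_decomp f); set a := xpart f; set c := tpart f.
transitivity (xmul (Q1 (Q1e a) + Q1e (Q1 a) + a) + tmul (Q1 (Q1e c) + Q1e (Q1 c) + c)).
  by push_ops; char2.
by rewrite !IHn /=; case: (odd n); push_ops; char2.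
Qed.

Lemma imset_preimset (aT rT : finType) (g : aT -> rT) (C : {set aT}) (A : {set rT}) :
  A \subset g @: C -> A = g @: [set i in C | g i \in A].
Proof.
move=> sAgC; apply/setP => y; apply/idP/imsetP => [Ay|[i]]; last first.
  by rewrite inE => /andP [_ Agi] ->.
by case/imsetP: (subsetP sAgC y Ay) => i Ci yE; exists i; rewrite // inE Ci -yE Ay.
Qed.

(* [margolis_basis S] unfolds to
   [/\ forall b, b \in S -> Pop b = 0, forall z, Pop z = 0 -> hspan S z & hfree S]. *)
Definition boundary n (z : W n) : Prop := exists y, z = Pop y.

Definition hspan n (S : {set W n}) (z : W n) : Prop :=
  exists2 A : {set W n}, A \subset S & exists y, z = \sum_(b in A) b + Pop y.

Definition hfree n (S : {set W n}) : Prop :=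
  forall A : {set W n}, A \subset S -> boundary (\sum_(b in A) b) -> A = set0.

Section Homology.
Variable n : nat.
Implicit Types (S A : {set W n}) (y z : W n).

Lemma boundary_Pop y : boundary (Pop y).
Proof. by exists y. Qed.

Lemma boundaryD z1 z2 : boundary z1 -> boundary z2 -> boundary (z1 + z2).
Proof. by move=> [y1 ->] [y2 ->]; exists (y1 + y2); rewrite raddfD. Qed.

Lemma boundary_sum (T : finType) (C : {pred T}) (F : T -> W n) :
  (forall i, i \in C -> boundary (F i)) -> boundary (\sum_(i in C) F i).
Proof.
move=> CF; apply: big_ind => [|z1 z2|i /CF //]; last exact: boundaryD.
by exists 0; rewrite raddf0.
Qed.

Lemma hspan_boundary S z : boundary z -> hspan S z.
Proof.
by move=> [y ->]; exists set0; rewrite ?sub0set //; exists y; rewrite big_set0 add0r.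
Qed.

Lemma hspan_mem S z : z \in S -> hspan S z.
Proof.
move=> Sz; exists [set z]; rewrite ?sub1set //.
by exists 0; rewrite big_set1 raddf0 addr0.
Qed.

Lemma sum_symdiff A1 A2 :
  \sum_(b in A1) b + \sum_(b in A2) b = \sum_(b in (A1 :\: A2) :|: (A2 :\: A1)) b.
Proof.
rewrite (big_setID (A := A1) A2) (big_setID (A := A2) A1) setIC addrACA addWxx add0r.
rewrite [RHS](big_setID (A1 :\: A2)); congr (_ + _); apply: eq_bigl => b; rewrite !inE;
  by case: (b \in A1); case: (b \in A2).
Qed.

Lemma sum_setU_disjoint A1 A2 : [disjoint A1 & A2] ->
  \sum_(b in A1 :|: A2) b = \sum_(b in A1) b + \sum_(b in A2) b.
Proof. by move=> dis; rewrite -bigU //; apply: eq_bigl => b; rewrite !inE. Qed.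

Lemma hspanD S z1 z2 : hspan S z1 -> hspan S z2 -> hspan S (z1 + z2).
Proof.
move=> [A1 sA1S [y1 ->]] [A2 sA2S [y2 ->]].
exists ((A1 :\: A2) :|: (A2 :\: A1)).
  by rewrite subUset !(subset_trans (subsetDl _ _)).
by exists (y1 + y2); rewrite raddfD -sum_symdiff addrACA.
Qed.

Lemma hspan_sum S (T : finType) (C : {pred T}) (F : T -> W n) :
  (forall i, i \in C -> hspan S (F i)) -> hspan S (\sum_(i in C) F i).
Proof.
move=> CF; apply: big_ind => [|z1 z2|i /CF //]; last exact: hspanD.
by apply: hspan_boundary; exists 0; rewrite raddf0.
Qed.

Lemma margolis_basis_neq0 S b : margolis_basis S -> b \in S -> b != 0.
Proof.
case=> _ _ freeS Sb; apply: contraTneq isT => b0.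
have /setP /(_ b) : [set b] = set0.
  by apply: freeS; rewrite ?sub1set // big_set1 b0; exists 0; rewrite raddf0.
by rewrite !inE eqxx.
Qed.

Lemma margolis_basis_shift S (phi : W n -> W n) :
  margolis_basis S -> (forall s, s \in S -> exists y, phi s = s + Pop y) ->
  margolis_basis (phi @: S).
Proof.
move=> [cycS spanS freeS] phiS.
have phi_bd s : s \in S -> boundary (phi s + s).
  by case/phiS => y ->; exists y; char2.
split.
- move=> _ /imsetP [s Ss ->]; case: (phiS s Ss) => y ->.
  by rewrite raddfD /= PopPop cycS // addr0.
- move=> z /spanS [A sAS [y ->]]; apply: hspanD; last exact/hspan_boundary/boundary_Pop.
  apply: hspan_sum => s As; have Ss := subsetP sAS s As.
  have -> : s = phi s + (phi s + s) by char2.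
  by apply: hspanD; [apply/hspan_mem/imset_f | apply/hspan_boundary/phi_bd].
- have phi_inj : {in S &, injective phi}.
    move=> s1 s2 Ss1 Ss2 phi12; apply/eqP; apply: contraTT isT => s12.
    have /setP /(_ s1) : [set s1; s2] = set0.
      apply: freeS; first by rewrite subUset !sub1set Ss1 Ss2.
      rewrite big_setU1 ?inE // big_set1 /=.
      have -> : s1 + s2 = (phi s1 + s1) + (phi s2 + s2) by rewrite phi12; char2.
      by apply: boundaryD; apply: phi_bd.
    by rewrite !inE eqxx.
  move=> A sAS; rewrite (imset_preimset sAS) big_imset /=; last first.
    by move=> s1 s2; rewrite !inE => /andP [Ss1 _] /andP [Ss2 _]; apply: phi_inj.
  set A0 := [set s in S | _] => bdA.
  suff -> : A0 = set0 by rewrite imset0.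
  apply: freeS; first by apply/subsetP => s; rewrite inE => /andP [].
  have -> : \sum_(s in A0) s = \sum_(s in A0) phi s + \sum_(s in A0) (phi s + s).
    by rewrite -big_split; apply: eq_bigr => s _ /=; char2.
  apply: boundaryD bdA _; apply: boundary_sum => s; rewrite inE => /andP [Ss _].
  exact: phi_bd.
Qed.
End Homology.

Section Cone.
Variables (m : nat) (B K : {set W m}) (c : W m -> W m).
Hypotheses (basisB : margolis_basis B) (sKB : K \subset B).
Hypothesis Q1_ker : forall k, k \in K -> Q1 k = Pop (c k).
Hypothesis Q1_coker : forall s, s \in B :\: K -> Q1 s \in K.
Hypothesis Q1_coker_inj : {in B :\: K &, injective (@Q1 m)}.

Local Notation N := (B :\: K).
Local Notation lift k := (xmul k + tmul (c k)).
Local Notation cone := ((@tmul m) @: (B :\: (@Q1 m) @: N) :|: [set lift k | k in K]).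

Lemma Q1_sum_basis (A : {set W m}) y : A \subset B ->
  exists y', Q1 (\sum_(b in A) b + Pop y) = \sum_(b in (@Q1 m) @: (A :&: N)) b + Pop y'.
Proof.
move=> sAB; exists (\sum_(k in A :\: N) c k + Q1 y).
rewrite raddfD raddf_sum /= Q1_PopC (big_setID (A := A) N) /= big_imset; last first.
  by move=> b1 b2 /setIP [_ Nb1] /setIP [_ Nb2]; apply: Q1_coker_inj.
rewrite -addrA raddfD raddf_sum /=; congr (_ + (_ + _)).
apply: eq_bigr => b /setDP [Ab].
by rewrite inE (subsetP sAB b Ab) andbT negbK => /Q1_ker.
Qed.

Lemma ker_Q1_hspan a : Pop a = 0 -> boundary (Q1 a) -> hspan K a.
Proof.
case: basisB => _ spanB freeB Pa [w Q1a].
have [A sAB [y aE]] := spanB _ Pa; exists A; last by exists y.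
have [y' Q1A] := Q1_sum_basis y sAB.
have /eqP : (@Q1 m) @: (A :&: N) = set0.
  apply: freeB.
    apply/subsetP => _ /imsetP [b /setIP [_ Nb] ->].
    exact/(subsetP sKB)/Q1_coker.
  by exists (w + y'); rewrite raddfD /= -Q1a aE Q1A; char2.
rewrite imset_eq0 => /eqP AN0; apply/subsetP => b Ab.
apply: contraTT isT => Kb; have : b \in A :&: N by rewrite !inE Kb Ab (subsetP sAB).
by rewrite AN0 inE.
Qed.

Lemma coker_free (R : {set W m}) a : R \subset B :\: (@Q1 m) @: N -> Pop a = 0 ->
  boundary (\sum_(r in R) r + Q1 a) -> R = set0.
Proof.
case: basisB => _ spanB freeB sRB Pa [w bdR].
have [A sAB [y aE]] := spanB _ Pa; have [y' Q1A] := Q1_sum_basis y sAB.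
have disjRQ : [disjoint R & (@Q1 m) @: (A :&: N)].
  rewrite disjoints_subset; apply/subsetP => r /(subsetP sRB) /setDP [_ nQr].
  by rewrite inE; apply: contra nQr => /imsetP [b /setIP [_ Nb] ->]; apply: imset_f.
have /setP RQ0 : R :|: (@Q1 m) @: (A :&: N) = set0.
  apply: freeB.
    rewrite subUset (subset_trans sRB) ?subsetDl //.
    apply/subsetP => _ /imsetP [b /setIP [_ Nb] ->].
    exact/(subsetP sKB)/Q1_coker.
  exists (w + y'); rewrite raddfD /= -bdR aE Q1A.
  by rewrite sum_setU_disjoint //; char2.
by apply/setP => r; move: (RQ0 r); rewrite !inE; case: (r \in R).
Qed.

Lemma cone_cycle z : z \in cone -> Pop z = 0.
Proof.
case: basisB => cycB _ _; case/setUP => /imsetP [b Bb ->].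
  by rewrite Pop_tmul cycB ?raddf0 //; case/setDP: Bb.
by push_ops; rewrite Q1_ker // cycB ?(subsetP sKB) //; push_ops; char2.
Qed.

Lemma cone_hspan_tmul b : b \in B -> hspan cone (tmul b).
Proof.
case: basisB => cycB _ _ Bb; case: (boolP (b \in (@Q1 m) @: N)) => [|nQb].
  case/imsetP => s /setDP [Bs _] ->; apply: hspan_boundary; exists (xmul s).
  by push_ops; rewrite cycB //; push_ops.
by apply/hspan_mem/setUP; left; rewrite imset_f // inE nQb.
Qed.

Lemma cone_hspan z : Pop z = 0 -> hspan cone z.
Proof.
case: basisB => _ spanB _ Pz.
have Pa : Pop (xpart z) = 0 by rewrite -xpart_Pop Pz raddf0.
have Q1a : Q1 (xpart z) = Pop (tpart z).
  by apply: addW_eq0; rewrite -tpart_Pop Pz raddf0.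
have [A sAK [y aE]] := ker_Q1_hspan Pa (ex_intro _ _ Q1a).
pose u := \sum_(k in A) lift k + Pop (xmul y).
have span_u : hspan cone u.
  apply: hspanD; last exact/hspan_boundary/boundary_Pop.
  apply: hspan_sum => k Ak; apply/hspan_mem/setUP; right.
  exact/imset_f/(subsetP sAK).
have Pu : Pop u = 0.
  rewrite raddfD /= PopPop addr0 raddf_sum big1 // => k Ak /=.
  by apply: cone_cycle; apply/setUP; right; exact/imset_f/(subsetP sAK).
have zuE : z + u = tmul (tpart (z + u)).
  suff xzu : xpart (z + u) = 0 by rewrite {1}(xt_decomp (z + u)) xzu raddf0 add0r.
  rewrite raddfD /= aE /u raddfD raddf_sum /= xpart_Pop.
  have xlift k : xpart (lift k) = k by push_ops.
  by rewrite (eq_bigr _ (fun k _ => xlift k)); push_ops; char2.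
have Pc : Pop (tpart (z + u)) = 0.
  by apply: tmul_inj; rewrite raddf0 -Pop_tmul -zuE raddfD /= Pz Pu addr0.
have [A' sA'B [y' cE]] := spanB _ Pc.
have -> : z = (z + u) + u by char2.
apply: hspanD span_u; rewrite zuE cE raddfD /= raddf_sum -Pop_tmul.
apply: hspanD; last exact/hspan_boundary/boundary_Pop.
by apply: hspan_sum => b Ab; apply/cone_hspan_tmul/(subsetP sA'B).
Qed.

Lemma cone_sum_boundary (R1 K1 : {set W m}) :
  R1 \subset B :\: (@Q1 m) @: N -> K1 \subset K ->
  boundary (\sum_(r in R1) tmul r + \sum_(k in K1) lift k) -> R1 = set0 /\ K1 = set0.
Proof.
case: basisB => _ _ freeB sR1 sK1 [w sumRK].
have xlift k : xpart (lift k) = k by push_ops.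
have K1_0 : K1 = set0.
  apply: freeB (subset_trans sK1 sKB) _; exists (xpart w).
  rewrite -xpart_Pop -sumRK raddfD !raddf_sum /= (eq_bigr _ (fun k _ => xlift k)).
  by rewrite [\sum_(r in R1) _]big1 ?add0r // => r _; push_ops.
split=> //; move: sumRK; rewrite K1_0 big_set0 addr0 => sumR.
apply: (@coker_free _ (xpart w)) => //.
  by rewrite -xpart_Pop -sumR raddf_sum big1 // => r _; push_ops.
exists (tpart w); apply/esym/addW_eq0.
have -> : \sum_(r in R1) r = tpart (Pop w).
  by rewrite -sumR raddf_sum; apply: eq_bigr => r _; push_ops.
by rewrite tpart_Pop; char2.
Qed.

Lemma cone_free : hfree cone.
Proof.
move=> A sAC bdA.
set R := B :\: (@Q1 m) @: N; set T := (@tmul m) @: R.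
set R1 := [set r in R | tmul r \in A :&: T].
set K1 := [set k in K | lift k \in A :\: T].
have AR1 : A :&: T = (@tmul m) @: R1 by exact/imset_preimset/subsetIr.
have AK1 : A :\: T = [set lift k | k in K1].
  apply: imset_preimset; apply/subsetP => y /setDP [Ay nTy].
  by case/setUP: (subsetP sAC y Ay) => // Ty; rewrite Ty in nTy.
have [R1_0 K1_0] : R1 = set0 /\ K1 = set0.
  apply: cone_sum_boundary; try by apply/subsetP => r; rewrite inE => /andP [].
  move: bdA; rewrite (big_setID (A := A) T) AR1 AK1 !big_imset //.
    by move=> k1 k2 _ _ /(congr1 (@xpart m)); push_ops.
  by move=> r1 r2 _ _; apply: tmul_inj.
by rewrite -(setID A T) AR1 AK1 R1_0 K1_0 !imset0 setU0.
Qed.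

Theorem margolis_basis_cone : margolis_basis cone.
Proof. by split; [exact: cone_cycle | exact: cone_hspan | exact: cone_free]. Qed.

End Cone.

Lemma Q1_Q1eC n (f : W n) : ~~ odd n -> Q1 (Q1e f) = Q1e (Q1 f).
Proof. by move=> ev; apply: addW_eq0; rewrite Q1_Q1e_bracket (negbTE ev). Qed.

Definition adapted n (z : W n) : Prop :=
  [/\ Pop z = 0, Q1 z = Pop (Q1e z) & z + exch z = Q1 (Q1e z)].

Lemma adapted_exch n (z : W n) : ~~ odd n -> adapted z -> adapted (exch z).
Proof.
move=> ev [Pz Q1z ez].
have ezE : exch z = z + Q1 (Q1e z) by rewrite -ez; char2.
have Q1eE : Q1e (exch z) = Q1e z.
  by rewrite ezE raddfD /= -Q1_Q1eC // Q1eQ1e raddf0 addr0.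
split.
- by rewrite ezE raddfD /= Pz add0r -Q1_PopC -Q1z Q1Q1.
- by rewrite Q1eE ezE raddfD /= Q1Q1 addr0.
- by rewrite exchK Q1eE -ez; char2.
Qed.

Lemma exch_Q1_xmul n (b : W n) :
  exch (Q1 (xmul b)) = xmul (exch b) + tmul (Q1e (exch b)).
Proof. by push_ops; rewrite /Q1e exchK addrC. Qed.

Lemma Q1_xmul_adapted n (b : W n) :
  adapted b -> Q1 (xmul b) = tmul (exch b) + Pop (xmul (Q1e b)).
Proof.
case=> _ Q1b eb; have ebE : exch b = b + Q1 (Q1e b) by rewrite -eb; char2.
by push_ops; rewrite Q1b ebE; push_ops; char2.
Qed.

Lemma adapted_xmul_Q1_xmul n (b : W n) :
  ~~ odd n -> adapted b -> adapted (xmul (Q1 (xmul b))).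
Proof.
move=> ev [Pb Q1b eb]; have ebE : exch b = b + Q1 (Q1e b) by rewrite -eb; char2.
have eQ1b : exch (Q1 b) = Q1e b by rewrite /Q1e ebE raddfD /= Q1Q1 addr0.
split; push_ops; rewrite -?Q1_Q1eC // -?Q1_PopC -?Q1b ?eQ1b ?ebE; push_ops;
  by rewrite ?Q1Q1 ?Pb; push_ops; char2.
Qed.

Definition adapted_basis n (B : {set W n}) : Prop :=
  [/\ margolis_basis B, forall b, b \in B -> exch b \in B
    & forall b, b \in B -> adapted b].

Lemma exch_imset n (B : {set W n}) :
  (forall b, b \in B -> exch b \in B) -> (@exch n) @: B = B.
Proof.
move=> exchB; apply/eqP; rewrite eqEsubset; apply/andP; split.
  by apply/subsetP => _ /imsetP [b Bb ->]; apply: exchB.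
by apply/subsetP => b Bb; rewrite -[b]exchK; apply/imset_f/exchB.
Qed.

Lemma margolis_basis_odd_step n (B : {set W n}) : ~~ odd n -> adapted_basis B ->
  margolis_basis ([set Q1 (xmul b) | b in B] :|: [set exch (Q1 (xmul b)) | b in B]).
Proof.
move=> ev [basisB exchB adB].
have Q1B b : b \in B -> Q1 b = Pop (Q1e b) by case/adB.
have cone : margolis_basis ((@tmul n) @: B :|: [set xmul k + tmul (Q1e k) | k in B]).
  have := margolis_basis_cone basisB (subxx B) Q1B.
  by rewrite setDv imset0 setD0; apply=> s; rewrite inE.
pose phi z := if z \in (@tmul n) @: B then Q1 (xmul (exch (tpart z))) else z.
have lift_notin k : k \in B -> xmul k + tmul (Q1e k) \notin (@tmul n) @: B.
  move=> Bk; apply/imsetP => -[b _ /(congr1 (@xpart n))]; push_ops => k0.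
  by move: (margolis_basis_neq0 basisB Bk); rewrite k0 eqxx.
have <- : phi @: ((@tmul n) @: B :|: [set xmul k + tmul (Q1e k) | k in B]) =
    [set Q1 (xmul b) | b in B] :|: [set exch (Q1 (xmul b)) | b in B].
  rewrite imsetU; congr (_ :|: _); rewrite -[in RHS](exch_imset exchB) -!imset_comp;
    apply: eq_in_imset => b Bb /=.
    by rewrite /phi imset_f // tpart_tmul.
  by rewrite /phi (negbTE (lift_notin b Bb)) exch_Q1_xmul exchK.
apply: margolis_basis_shift cone _ => s; rewrite /phi.
case: ifP => [/imsetP [b Bb ->] _|_ _]; last by exists 0; rewrite raddf0 addr0.
exists (xmul (Q1e (exch b))); rewrite tpart_tmul Q1_xmul_adapted ?exchK //.
exact/adB/exchB.
Qed.

Lemma Q1_exch_Q1_xmul n (b : W n) : ~~ odd n -> adapted b ->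
  Q1 (exch (Q1 (xmul b))) = Q1 (xmul b).
Proof.
move=> ev adb; have [_ _] := adapted_exch ev adb; rewrite exchK => eeb.
case: adb => _ _ eb; have ebE : exch b = b + Q1 (Q1e b) by rewrite -eb; char2.
rewrite exch_Q1_xmul; push_ops; rewrite -eeb ebE; push_ops.
by rewrite Q1Q1; push_ops; char2.
Qed.

Lemma margolis_basis_even_step n (B : {set W n}) : ~~ odd n -> adapted_basis B ->
  margolis_basis ([set xmul (Q1 (xmul b)) | b in B] :|:
                  [set tmul (exch (Q1 (xmul b))) | b in B]).
Proof.
move=> ev adbB; have basisS := margolis_basis_odd_step ev adbB.
case: adbB => basisB _ adB.
set F1 := [set Q1 (xmul b) | b in B]; set F2 := [set exch (Q1 (xmul b)) | b in B].
have Q1F2 b : b \in B -> Q1 (exch (Q1 (xmul b))) = Q1 (xmul b).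
  by move=> Bb; apply: Q1_exch_Q1_xmul ev (adB b Bb).
have disjF : [disjoint F2 & F1].
  rewrite -setI_eq0; apply/eqP/setP => y; rewrite !inE.
  apply/andP => -[/imsetP [b Bb ->] /imsetP [b' _ /(congr1 (@Q1 _))]].
  rewrite Q1F2 // Q1Q1 => /(congr1 (@tpart n)); push_ops => b0.
  by move: (margolis_basis_neq0 basisB Bb); rewrite b0 eqxx.
have SF1 : (F1 :|: F2) :\: F1 = F2.
  by rewrite setDUl setDv set0U; apply/setDidPl.
have Q1F2E : (@Q1 n.+1) @: F2 = F1.
  by rewrite -imset_comp; apply: eq_in_imset => b Bb /=; apply: Q1F2.
have cone : margolis_basis ((@tmul n.+1) @: F2 :|: [set xmul k + tmul 0 | k in F1]).
  have := @margolis_basis_cone _ (F1 :|: F2) F1 (fun _ => 0) basisS (subsetUl _ _).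
  rewrite SF1 Q1F2E SF1; apply.
  - by move=> _ /imsetP [b _ ->]; rewrite Q1Q1 raddf0.
  - by move=> _ /imsetP [b Bb ->]; rewrite Q1F2 //; apply: imset_f.
  - move=> _ _ /imsetP [b Bb ->] /imsetP [b' Bb' ->]; rewrite !Q1F2 //.
    by move=> /(congr1 (@tpart n)); push_ops => ->.
rewrite -imset_comp in cone; rewrite setUC.
suff -> : [set xmul (Q1 (xmul b)) | b in B] = [set xmul k + tmul 0 | k in F1] by [].
by rewrite -imset_comp; apply: eq_imset => b /=; push_ops.
Qed.

Lemma margolis_basis_W0 : margolis_basis [set mono (set0 : {set 'I_0})].
Proof.
split.
- by move=> b _; rewrite Pop_W0.
- move=> z _; case: (F2_cases (z set0)) => z0.
    apply: hspan_boundary; exists 0; rewrite Pop_W0.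
    by apply/ffunP => K; rewrite (set_I0 K) z0 ffunE.
  apply: hspan_mem; rewrite inE; apply/eqP/ffunP => K.
  by rewrite (set_I0 K) z0 ffunE eqxx.
- move=> A; rewrite subset1 => /orP [/eqP -> [y]|/eqP //].
  rewrite big_set1 Pop_W0 => /ffunP /(_ set0).
  by rewrite !ffunE eqxx => /eqP; rewrite oner_eq0.
Qed.

Lemma adapted_basis_Beven t : adapted_basis (Beven t).
Proof.
elim: t => [|t [basisB exchB adB]] /=.
  split; first exact: margolis_basis_W0.
    by move=> b; rewrite inE => /eqP ->; rewrite exch_mono setC0 (set_I0 setT) inE.
  move=> b; rewrite inE => /eqP ->.
  by split; rewrite ?Pop_W0 ?Q1_W0 // exch_mono setC0 (set_I0 setT) addWxx.
have ev : ~~ odd t.*2 by rewrite odd_double.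
split; first exact: margolis_basis_even_step.
- move=> _ /setUP [] /imsetP [b Bb ->]; apply/setUP.
    by right; rewrite exch_xmul; apply: imset_f.
  by left; rewrite exch_tmul exchK; apply: imset_f.
- move=> _ /setUP [] /imsetP [b Bb ->]; first exact: adapted_xmul_Q1_xmul ev (adB b Bb).
  rewrite -exch_xmul; apply: adapted_exch (adapted_xmul_Q1_xmul ev (adB b Bb)).
  by rewrite /= negbK.
Qed.

Theorem mainTheorem11 :
  forall t : nat, margolis_basis (Beven t) /\ margolis_basis (Bodd t).
Proof.
move=> t; have adB := adapted_basis_Beven t; split; first by case: adB.
by apply: margolis_basis_odd_step adB; rewrite odd_double.
Qed.
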